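(* Let $\Gamma$ be a tetravalent graph admitting a subgroup $G\le\mathrm{Aut}(\Gamma)$ acting regularly on the arcs of $\Gamma$. If $\Gamma$ is the underlying graph of a map $\mathcal M$ in class $2_{\{0,1\}}$ with $\mathrm{Aut}(\mathcal M)=G$, then all orbits of $G$-consistent cycles of $\Gamma$ are $G$-symmetric. Moreover, if $G=\mathrm{Aut}(\Gamma)$ and all orbits of $G$-consistent cycles of $\Gamma$ are $G$-symmetric, then for any two orbits of $G$-consistent cycles of $\Gamma$ there exists a map $\mathcal M$ in class $2_{\{0,1\}}$ with $\mathrm{Aut}(\mathcal M)=G$ and underlying graph $\Gamma$ whose face boundaries are exactly the members of these two orbits.
   Context: A map is a $2$-cell embedding of a connected simple graph (its underlying graph) in a closed surface; the components of the complement are the faces. All maps considered are polytopal: flags correspond bijectively to incident triples (vertex, edge, face). For a flag $\Phi$ and $i\in\{0,1,2\}$, $\Phi^i$ is the unique flag differing from $\Phi$ exactly in its vertex ($i=0$), edge ($i=1$) or face ($i=2$). $\mathrm{Aut}(\mathcal M)$ is the group of automorphisms of the underlying graph preserving the set of faces, acting on flags. A map is in class $2_{\{0,1\}}$ if $\mathrm{Aut}(\mathcal M)$ has exactly two orbits on flags and for every flag $\Phi$, the flags $\Phi^0,\Phi^1$ lie in the orbit of $\Phi$ while $\Phi^2$ does not. For an arc-transitive $G\le\mathrm{Aut}(\Gamma)$, a directed cycle $(v_0,\ldots,v_{r-1})$ is $G$-consistent if some $g\in G$ maps each $v_i$ to $v_{i+1}$ (indices mod $r$); an undirected cycle is $G$-consistent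 if both orientations are; it is $G$-symmetric if moreover some element of $G$ maps one orientation to the other. $G$ acts on the set of $G$-consistent cycles, giving orbits of $G$-consistent cycles. *)

From mathcomp Require Import all_boot all_fingroup.
Set Implicit Arguments. Unset Strict Implicit. Unset Printing Implicit Defensive.


Section Defs.
Variable V : finType.
Variable e : rel V.

Definition simple_graph := symmetric e /\ irreflexive e.
Definition graph_connected := forall x y : V, connect e x y.
Definition tetravalent := forall v : V, #|[set w | e v w]| = 4.

Definition graph_aut : {set {perm V}} :=
  [set g : {perm V} | [forall x, forall y, e (g x) (g y) == e x y]].

Definition arc_regular (G : {set {perm V}}) :=
  forall u v x y : V, e u v -> e x y ->
    #|[set g in G | (g u == x) && (g v == y)]| = 1.

Definition is_edge (E : {set V}) := exists u w, e u w /\ E = [set u; w].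

Definition dcycle (s : seq V) := [/\ uniq s, 3 <= size s & path.cycle e s].

Definition dconsistent (G : {set {perm V}}) (s : seq V) :=
  exists2 g, g \in G & map g s = rot 1 s.

Definition cycle_edges (s : seq V) : {set {set V}} :=
  [set [set x; next s x] | x in s].

Definition ucycle (C : {set {set V}}) := exists s, dcycle s /\ cycle_edges s = C.

Definition uconsistent (G : {set {perm V}}) (C : {set {set V}}) :=
  exists s, [/\ dcycle s, cycle_edges s = C, dconsistent G s & dconsistent G (rev s)].

Definition usymmetric (G : {set {perm V}}) (C : {set {set V}}) :=
  uconsistent G C /\
  exists s, [/\ dcycle s, cycle_edges s = C &
     exists2 g, g \in G & exists k, map g s = rot k (rev s)].

Definition act_cyc (g : {perm V}) (C : {set {set V}}) : {set {set V}} :=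
  [set g @: E | E : {set V} in C].

Definition cyc_orbit (G : {set {perm V}}) (C : {set {set V}}) : {set {set {set V}}} :=
  [set act_cyc g C | g in G].

Definition cc_orbit (G : {set {perm V}}) (O : {set {set {set V}}}) :=
  exists2 C, uconsistent G C & O = cyc_orbit G C.

Definition orbit_symmetric (G : {set {perm V}}) (O : {set {set {set V}}}) :=
  forall C, C \in O -> usymmetric G C.

(* A (polytopal) map with underlying graph Gamma, given by its set F of faces;
   each face boundary is a cycle of Gamma, each edge lies on exactly two faces,
   and the faces around each vertex form a single cycle (closed surface). *)
Definition is_map (F : {set {set {set V}}}) :=
  [/\ forall f, f \in F -> ucycle f,
      forall u w, e u w -> #|[set f in F | [set u; w] \in f]| = 2 &
      forall v x y, e v x -> e v y ->
        connect (fun a b => [&& e v a, e v b &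
                  [exists f in F, ([set v; a] \in f) && ([set v; b] \in f)]]) x y].

Definition map_aut (F : {set {set {set V}}}) : {set {perm V}} :=
  [set g in graph_aut | [set act_cyc g f | f in F] == F].

Definition flag_t := (V * {set V} * {set {set V}})%type.

Definition is_flag (F : {set {set {set V}}}) (P : flag_t) :=
  let: (v, E, f) := P in [/\ v \in E, is_edge E, E \in f & f \in F].

Definition act_flag (g : {perm V}) (P : flag_t) : flag_t :=
  let: (v, E, f) := P in (g v, g @: E, act_cyc g f).

Definition same_orbit (F : {set {set {set V}}}) (P Q : flag_t) :=
  exists2 g, g \in map_aut F & act_flag g P = Q.

Definition flag_adj (F : {set {set {set V}}}) (i : nat) (P Q : flag_t) :=
  is_flag F Q /\
  let: (v, E, f) := P in let: (v', E', f') := Q in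
  match i with
  | 0 => [/\ v' != v, E' = E & f' = f]
  | 1 => [/\ v' = v, E' != E & f' = f]
  | _ => [/\ v' = v, E' = E & f' != f]
  end.

Definition class2_01 (F : {set {set {set V}}}) :=
  (exists P1 P2, [/\ is_flag F P1, is_flag F P2, ~ same_orbit F P1 P2 &
      forall Q, is_flag F Q -> same_orbit F P1 Q \/ same_orbit F P2 Q]) /\
  (forall P, is_flag F P ->
     [/\ forall Q, flag_adj F 0 P Q -> same_orbit F P Q,
         forall Q, flag_adj F 1 P Q -> same_orbit F P Q &
         forall Q, flag_adj F 2 P Q -> ~ same_orbit F P Q]).

End Defs.

From Pilot Require Import Defs.
From mathcomp Require Import all_boot all_fingroup.
Set Implicit Arguments. Unset Strict Implicit. Unset Printing Implicit Defensive.

(** A directed cycle is G-consistent iff it is an orbit of some shift g in G;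
    by arc-regularity a shift is determined by one 2-arc along it, so two
    consistent cycles through a common 2-arc coincide.

    For a map M in class 2_{0,1} with Aut(M) = G, the flag (v, va, f)^1 =
    (v, vb, f) lies in the orbit of (v, va, f), which gives an element of G_v
    swapping a and b.  The faces around v link all four neighbours and, by
    tetravalence, such swaps compose, so G_v swaps every pair of neighbours.
    On a consistent cycle (v0, v1, v2, ...) with shift g, the swap r of v0 and
    v2 at v1 satisfies g^r = g^-1 (both agree on the arc (v2, v1)), hence r
    reverses the cycle.

    Conversely, if all consistent cycles are symmetric, the stabiliser of such
    a cycle is transitive on its arcs, so by arc-regularity two cycles of one
    G-orbit sharing an edge coincide.  For two orbits O1 and O2, every edge then
    lies on exactly one cycle of each, the faces around a vertex alternate
    between O1 and O2, and two flags are in the same Aut-orbit iff their faces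
    are in the same G-orbit; when G = Aut(Gamma) this gives a map in class
    2_{0,1} with automorphism group G. *)

(* [act_cyc g C] is by definition [cyc_act C g], so the orbits and stabilisers
   of fingroup/action apply to cycles. *)
Notation cyc_act := ('P^*^*)%act.

Local Open Scope group_scope.

Section Set2.
Variable T : finType.
Implicit Types (a b c d : T).

Lemma imset_set2 (f : T -> T) a b : f @: [set a; b] = [set f a; f b].
Proof. by rewrite imsetU1 imset_set1. Qed.

Lemma set2C a b : [set a; b] = [set b; a].
Proof. exact: setUC. Qed.

Lemma eq_set2 a b c d :
  [set a; b] = [set c; d] -> (a = c /\ b = d) \/ (a = d /\ b = c).
Proof.
move=> E.
have Ha : a \in [set c; d] by rewrite -E set21.
have Hb : b \in [set c; d] by rewrite -E set22.
have Hc : c \in [set a; b] by rewrite E set21.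
have Hd : d \in [set a; b] by rewrite E set22.
case/set2P: Ha => Ha; case/set2P: Hb => Hb; subst; auto.
- by case/set2P: Hd => ->; auto.
- by case/set2P: Hc => ->; auto.
Qed.

End Set2.

Section SeqCycles.
Variable T : finType.
Implicit Types (f : T -> T) (s t : seq T) (x y : T).

Lemma fcycle_rot1 f s : fcycle f s = (map f s == rot 1 s).
Proof.
case: s => [|x s] //=; rewrite rot1_cons.
elim: s {1 3}x => [|y s IHs] z /=; first by rewrite eqseq_cons andbT.
by rewrite eqseq_cons IHs.
Qed.

Lemma fcycle_eq_rot f s x t : fcycle f s -> fcycle f (x :: t) -> x \in s ->
  size s = (size t).+1 -> x :: t = rot (index x s) s.
Proof.
move=> fs fxt xs Ss; rewrite (rot_index xs).
have := fs; rewrite -(rot_cycle (index x s)) (rot_index xs) => fu.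
rewrite (fcycle_consE fu) (fcycle_consE fxt).
by have := size_rot (index x s) s; rewrite (rot_index xs) Ss => -[->].
Qed.

Lemma fcycle_from_next f s : uniq s -> {in s, f =1 next s} -> fcycle f s.
Proof. by move=> Us fs; apply: cycle_from_next => // x /fs /= ->. Qed.

Lemma next_ind s x0 (P : T -> Prop) : uniq s -> x0 \in s -> P x0 ->
  (forall y, y \in s -> P y -> P (next s y)) -> forall y, y \in s -> P y.
Proof.
move=> Us x0s P0 IH y ys.
have /iter_findex <- : fconnect (next s) x0 y by rewrite (fconnect_cycle (cycle_next Us) x0s).
elim: (findex _ _ _) => [|n IHn] //=; apply: IH => //.
by elim: n {IHn} => //= n IHn; rewrite mem_next.
Qed.

Lemma next_next_neq s x : uniq s -> 3 <= size s -> x \in s -> next s (next s x) != x.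
Proof.
move=> Us Ss /rot_to[i w Hw].
rewrite -!(next_rot i Us) Hw.
have : uniq (x :: w) by rewrite -Hw rot_uniq.
have : 3 <= size (x :: w) by rewrite -Hw size_rot.
case: w {Hw} => [|y [|z w]] //= _.
rewrite !inE !negb_or => /andP[/andP[xy /andP[xz _]] /andP[/andP[yz _] _]].
by rewrite eqxx (eq_sym y) (negbTE xy) eqxx eq_sym.
Qed.

Lemma next_prev_neq s x : uniq s -> 3 <= size s -> x \in s -> next s x != prev s x.
Proof.
move=> Us Ss xs; apply: contra (next_next_neq Us Ss xs) => /eqP ->.
by rewrite next_prev.
Qed.

End SeqCycles.

Section PermCycles.
Variable T : finType.
Implicit Types (g h : {perm T}) (s : seq T) (x y : T).

Lemma fcycle_revV g s : fcycle g s -> fcycle g^-1 (rev s).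
Proof. by rewrite rev_cycle; apply: sub_cycle => x y /= /eqP <-; rewrite permK. Qed.

Lemma fcycle_mapJ g h s : fcycle g s -> fcycle (g ^ h) (map h s).
Proof.
rewrite cycle_map; apply: sub_cycle => x y /= /eqP <-.
by rewrite conjgE !permM permK.
Qed.

Lemma fcycle_expg_arc g s x y : fcycle g s -> x \in s -> y \in s ->
  exists j, (g ^+ j) x = y /\ (g ^+ j) (g x) = g y.
Proof.
move=> gs xs ys; have /iter_findex gxy : fconnect g x y by rewrite (fconnect_cycle gs xs).
by exists (findex g x y); rewrite !permX -iterSr iterS gxy.
Qed.

End PermCycles.

Section CycleEdges.
Variable T : finType.
Implicit Types (g : {perm T}) (s t : seq T) (x y : T) (C : {set {set T}}).

Lemma act_cycE g C : act_cyc g C = cyc_act C g.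
Proof. by []. Qed.

Lemma cyc_orbitE (A : {set {perm T}}) C : cyc_orbit A C = orbit cyc_act A C.
Proof. by []. Qed.

Lemma cycle_edgesP s x y : uniq s ->
  [set x; y] \in cycle_edges s <-> x \in s /\ (y = next s x \/ y = prev s x).
Proof.
move=> Us; split.
- case/imsetP => z zs /eq_set2 [[-> ->]|[-> ->]]; first by auto.
  by rewrite mem_next prev_next //; auto.
- case=> xs [->|->]; first exact: imset_f.
  apply/imsetP; exists (prev s x); first by rewrite mem_prev.
  by rewrite next_prev // set2C.
Qed.

Lemma cycle_edges_next s x : uniq s -> x \in s -> [set x; next s x] \in cycle_edges s.
Proof. by move=> Us xs; apply/cycle_edgesP => //; auto. Qed.

Lemma cycle_edges_mem s x y : uniq s -> [set x; y] \in cycle_edges s -> x \in s.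
Proof. by move=> Us /cycle_edgesP[]. Qed.

Lemma cycle_edges_rev s : uniq s -> cycle_edges (rev s) = cycle_edges s.
Proof.
move=> Us; have Ur : uniq (rev s) by rewrite rev_uniq.
apply/setP => E; apply/imsetP/imsetP => [[x xs ->]|[x xs ->]].
- rewrite mem_rev in xs; rewrite next_rev //.
  have : [set x; prev s x] \in cycle_edges s by apply/cycle_edgesP => //; auto.
  by case/imsetP => z zs ->; exists z.
- have : [set x; next s x] \in cycle_edges (rev s).
    by apply/cycle_edgesP => //; rewrite mem_rev prev_rev //; auto.
  by case/imsetP => z zs ->; exists z.
Qed.

Lemma cycle_edges_rot k s : uniq s -> cycle_edges (rot k s) = cycle_edges s.
Proof.
move=> Us; apply/setP => E; apply/imsetP/imsetP => [[x xs ->]|[x xs ->]].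
- by exists x; rewrite ?next_rot // -(mem_rot k).
- by exists x; rewrite ?next_rot // mem_rot.
Qed.

Lemma act_edge g C a b : [set a; b] \in C -> [set g a; g b] \in act_cyc g C.
Proof. by move=> H; rewrite -imset_set2; apply: imset_f. Qed.

Lemma cycle_edges_map g s : uniq s -> cycle_edges (map g s) = act_cyc g (cycle_edges s).
Proof.
move=> Us; apply/setP => E; apply/imsetP/imsetP => [[x]|[E' /imsetP[y ys ->] ->]].
- case/mapP => y ys -> ->; exists [set y; next s y]; first exact: imset_f.
  by rewrite imset_set2 next_map //; apply: perm_inj.
- exists (g y); first by rewrite mem_map //; apply: perm_inj.
  by rewrite imset_set2 next_map //; apply: perm_inj.
Qed.

Lemma act_cycle_edges g s k t : uniq s -> map g s = rot k t ->
  act_cyc g (cycle_edges s) = cycle_edges t.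
Proof.
move=> Us gst; have Ut : uniq t by rewrite -(rot_uniq k) -gst map_inj_uniq //; apply: perm_inj.
by rewrite -cycle_edges_map // gst cycle_edges_rot.
Qed.

Lemma cycle_edges_next_eq s t x0 : uniq s -> uniq t -> 3 <= size t ->
  cycle_edges t = cycle_edges s -> x0 \in t -> next t x0 = next s x0 ->
  {in t, next t =1 next s}.
Proof.
move=> Us Ut St Est x0t tx0; apply: (next_ind Ut x0t tx0) => y yt ty.
set z := next t y.
have : [set z; next t z] \in cycle_edges s by rewrite -Est cycle_edges_next // mem_next.
case/(cycle_edgesP _ _ Us) => _ [] // tz.
by case/negP: (next_next_neq Ut St yt); rewrite -/z tz /z ty (prev_next Us).
Qed.

Lemma cycle_edges_orient s t : uniq s -> uniq t -> 3 <= size t ->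
  cycle_edges t = cycle_edges s ->
  {in t, next t =1 next s} \/ {in t, next t =1 next (rev s)}.
Proof.
move=> Us Ut St Est; have [x0 x0t] : exists x0, x0 \in t.
  by case: t St {Ut Est} => [|x0 t] //; exists x0; rewrite mem_head.
have : [set x0; next t x0] \in cycle_edges s by rewrite -Est cycle_edges_next.
case/(cycle_edgesP _ _ Us) => _ [] tx0; [left | right].
- exact: cycle_edges_next_eq Est x0t tx0.
- apply: (cycle_edges_next_eq _ Ut St _ x0t); rewrite ?rev_uniq ?cycle_edges_rev //.
  by rewrite next_rev.
Qed.

Lemma fcycle_cycle_edges (h : T -> T) s t x : uniq s -> uniq t -> fcycle h s -> fcycle h t ->
  x \in s -> x \in t -> cycle_edges s = cycle_edges t.
Proof.
move=> Us Ut hs ht xs xt.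
have st : s =i t by move=> y; rewrite -(fconnect_cycle hs xs) (fconnect_cycle ht xt).
have hst y : y \in s -> next s y = next t y by move=> ys; rewrite (nextE hs) ?(nextE ht) -?st.
apply/setP => E; apply/imsetP/imsetP => -[y ys ->].
- by exists y; [rewrite -st | rewrite hst].
- by exists y; [rewrite st | rewrite hst // st].
Qed.

End CycleEdges.

Section Graph.
Variables (V : finType) (e : rel V).
Hypotheses (esym : symmetric e) (eirr : irreflexive e).
Implicit Types (s : seq V) (E : {set V}) (C : {set {set V}}) (g : {perm V}) (v w x y z : V).

Lemma graph_autE g x y : g \in graph_aut e -> e (g x) (g y) = e x y.
Proof. by rewrite inE => /forallP/(_ x)/forallP/(_ y)/eqP. Qed.

Lemma dcycle_rev s : dcycle e s -> dcycle e (rev s).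
Proof.
case=> Us Ss Cs; split; rewrite ?rev_uniq ?size_rev //.
by rewrite rev_cycle (eq_cycle (e' := e)) // => x y /=; rewrite esym.
Qed.

Lemma dcycle_map g s : g \in graph_aut e -> dcycle e s -> dcycle e (map g s).
Proof.
move=> gA [Us Ss Cs]; split; rewrite ?size_map //.
  by rewrite map_inj_uniq //; apply: perm_inj.
by rewrite cycle_map (eq_cycle (e' := e)) // => x y /=; rewrite graph_autE.
Qed.

Lemma flag_edge v E : v \in E -> is_edge e E -> exists2 w, E = [set v; w] & e v w.
Proof.
move=> vE [a [b [eab Eab]]]; move: vE; rewrite Eab => /set2P[->|->].
- by exists b.
- by exists a; [exact: set2C | rewrite esym].
Qed.

(* [ucycle] alone would denote the predicate of path.v. *)
Lemma ucycle_edge C x y : Defs.ucycle e C -> [set x; y] \in C -> e x y.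
Proof.
case=> s [[Us _ Cs] <-] /(cycle_edgesP _ _ Us) [xs [->|->]]; first exact: next_cycle.
by rewrite esym; apply: prev_cycle.
Qed.

Lemma ucycle_other_edge C v x : Defs.ucycle e C -> [set v; x] \in C ->
  exists2 y, y != x & [set v; y] \in C.
Proof.
case=> s [[Us Ss _] <-] /(cycle_edgesP _ _ Us) [vs vx].
have np := next_prev_neq Us Ss vs.
case: vx => ->; [exists (prev s v) | exists (next s v)] => //.
- by rewrite eq_sym.
- by apply/cycle_edgesP => //; auto.
- exact: cycle_edges_next.
Qed.

Lemma ucycle_edges_at C v x y z : Defs.ucycle e C ->
  [set v; x] \in C -> [set v; y] \in C -> [set v; z] \in C -> y != x -> z != x -> y = z.
Proof.
case=> s [[Us _ _] <-].
move=> /(cycle_edgesP _ _ Us) [_ vx] /(cycle_edgesP _ _ Us) [_ vy] /(cycle_edgesP _ _ Us) [_ vz].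
by case: vx => ->; case: vy => ->; case: vz => ->; rewrite ?eqxx.
Qed.

Lemma ucycle_edge_ex C : Defs.ucycle e C -> exists u w, [set u; w] \in C.
Proof.
case=> s [[Us Ss _] <-]; case: s Us Ss => [|x s] // Us _.
by exists x, (next (x :: s) x); apply: cycle_edges_next; rewrite ?mem_head.
Qed.

Hypothesis tetra : tetravalent e.

Lemma tetravalent_neighbours v (l : seq V) : uniq l -> size l = 4 -> all (e v) l ->
  forall x, e v x -> x \in l.
Proof.
move=> Ul Sl /allP evl x evx.
have sub : {subset l <= enum [set w | e v w]} by move=> y /evl ?; rewrite mem_enum inE.
have le : size (enum [set w | e v w]) <= size l by rewrite -cardE tetra Sl.
by rewrite (uniq_min_size Ul sub le).2 mem_enum inE.
Qed.

End Graph.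

Lemma connect_ind (T : finType) (R : rel T) (P : T -> Prop) x y :
  P x -> (forall a b, R a b -> P a -> P b) -> connect R x y -> P y.
Proof.
move=> Px HR /connectP [p Rp ->]; elim: p x Px Rp => //= a p IHp x Px /andP [Rxa Rp].
exact: IHp (HR _ _ Rxa Px) Rp.
Qed.

Section ArcRegular.
Variables (V : finType) (e : rel V) (G : {group {perm V}}).
Hypotheses (esym : symmetric e) (GA : G \subset graph_aut e) (AR : arc_regular e G).
Implicit Types (s t : seq V) (C : {set {set V}}) (g h : {perm V}) (u v w x y a b : V).

Lemma group_autE g x y : g \in G -> e (g x) (g y) = e x y.
Proof. by move=> gG; rewrite graph_autE // (subsetP GA). Qed.

Lemma arc_regular_ex u v x y : e u v -> e x y -> exists2 g, g \in G & g u = x /\ g v = y.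
Proof.
move=> euv exy; have /eqP/cards1P [g Eg] := AR euv exy.
by have := set11 g; rewrite -Eg inE => /andP [gG /andP [/eqP gu /eqP gv]]; exists g.
Qed.

Lemma arc_regular_uniq g1 g2 u v : g1 \in G -> g2 \in G -> e u v ->
  g1 u = g2 u -> g1 v = g2 v -> g1 = g2.
Proof.
move=> g1G g2G euv g12u g12v.
have eg1 : e (g1 u) (g1 v) by rewrite group_autE.
have /eqP/cards1P [g Eg] := AR euv eg1.
have : g1 \in [set g] by rewrite -Eg inE g1G !eqxx.
have : g2 \in [set g] by rewrite -Eg inE g2G -g12u -g12v !eqxx.
by rewrite !inE => /eqP -> /eqP ->.
Qed.

Lemma arc_regular_fix g u v : g \in G -> e u v -> g u = u -> g v = v -> g = 1.
Proof. by move=> gG euv gu gv; apply: (arc_regular_uniq gG _ euv); rewrite ?perm1. Qed.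

Lemma dconsistentE s : dconsistent G s <-> exists2 g, g \in G & fcycle g s.
Proof.
by split=> -[g gG gs]; exists g => //; [rewrite fcycle_rot1 gs | apply/eqP; rewrite -fcycle_rot1].
Qed.

Lemma dconsistent_map h s : h \in G -> dconsistent G s -> dconsistent G (map h s).
Proof.
move=> hG /dconsistentE [g gG gs]; apply/dconsistentE.
by exists (g ^ h); [rewrite groupJ | apply: fcycle_mapJ].
Qed.

Lemma uconsistent_act h C : h \in G -> uconsistent e G C -> uconsistent e G (act_cyc h C).
Proof.
move=> hG [s [Ds <- s_cons rs_cons]]; have [Us _ _] := Ds.
exists (map h s); split; rewrite -?map_rev ?cycle_edges_map //.
- exact: dcycle_map (subsetP GA _ hG) Ds.
- exact: dconsistent_map.
- exact: dconsistent_map.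
Qed.

Lemma uconsistent_ucycle C : uconsistent e G C -> Defs.ucycle e C.
Proof. by case=> s [Ds Es _ _]; exists s. Qed.

Lemma uconsistent_fcycle C t : uconsistent e G C -> dcycle e t -> cycle_edges t = C ->
  exists2 h, h \in G & fcycle h t.
Proof.
case=> s [[Us _ _] <- /dconsistentE [g gG gs] /dconsistentE [g' g'G g's]] [Ut St _] Ets.
have ts y : y \in t -> y \in s.
  by move=> yt; apply: (cycle_edges_mem (y := next t y) Us); rewrite -Ets cycle_edges_next.
case: (cycle_edges_orient Us Ut St Ets) => tn; [exists g | exists g'] => //.
- by apply: fcycle_from_next => // y yt; rewrite tn // (nextE gs) ?ts.
- by apply: fcycle_from_next => // y yt; rewrite tn // (nextE g's) // mem_rev ts.
Qed.

Lemma uconsistent_two_arc C v a b : uconsistent e G C ->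
  [set v; a] \in C -> [set v; b] \in C -> a != b ->
  exists t h, [/\ uniq t, cycle_edges t = C, h \in G, fcycle h t & h a = v /\ h v = b].
Proof.
move=> HC; have [s [Ds Es _ _]] := HC; have [Us _ _] := Ds.
rewrite -Es => /(cycle_edgesP _ _ Us) [vs va] /(cycle_edgesP _ _ Us) [_ vb] ab.
have [t [Dt Et vt [ta tb]]] : exists t,
    [/\ dcycle e t, cycle_edges t = C, v \in t & a = prev t v /\ b = next t v].
  case: va vb ab => -> [] -> //; rewrite ?eqxx // => _; [exists (rev s) | exists s];
    split; rewrite ?cycle_edges_rev ?mem_rev ?(prev_rev Us) ?(next_rev Us) //.
  exact: dcycle_rev.
have [Ut _ _] := Dt; have [h hG ht] := uconsistent_fcycle HC Dt Et.
by exists t, h; split; rewrite ?Et // ta tb -!(nextE ht) ?mem_prev // (next_prev Ut).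
Qed.

Lemma two_arc_uniq C1 C2 v a b : uconsistent e G C1 -> uconsistent e G C2 ->
  [set v; a] \in C1 -> [set v; b] \in C1 -> [set v; a] \in C2 -> [set v; b] \in C2 ->
  a != b -> C1 = C2.
Proof.
move=> H1 H2 a1 b1 a2 b2 ab.
have [t1 [h1 [U1 E1 h1G h1t1 [h1a h1v]]]] := uconsistent_two_arc H1 a1 b1 ab.
have [t2 [h2 [U2 E2 h2G h2t2 [h2a h2v]]]] := uconsistent_two_arc H2 a2 b2 ab.
have eav : e a v by apply: (ucycle_edge esym (uconsistent_ucycle H1)); rewrite set2C.
have h12 : h1 = h2 by apply: (arc_regular_uniq h1G h2G eav); rewrite ?h1a ?h2a ?h1v ?h2v.
rewrite -E1 -E2 in a1 a2 *; rewrite h12 in h1t1.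
by apply: (fcycle_cycle_edges U1 U2 h1t1 h2t2 (x := a)); apply: (cycle_edges_mem (y := v));
  rewrite // set2C.
Qed.

Lemma cc_orbit_mem O C : cc_orbit e G O -> C \in O -> O = cyc_orbit G C.
Proof. by case=> C0 _ ->; rewrite !cyc_orbitE => /orbit_eqP ->. Qed.

Lemma cc_orbit_consistent O C : cc_orbit e G O -> C \in O -> uconsistent e G C.
Proof. by case=> C0 H0 ->; rewrite cyc_orbitE => /orbitP [g gG <-]; apply: uconsistent_act. Qed.

Lemma cc_orbit_edge O u w : cc_orbit e G O -> e u w -> exists2 C, C \in O & [set u; w] \in C.
Proof.
case=> C0 H0 -> euw; have HC0 := uconsistent_ucycle H0.
have [x [y xy]] := ucycle_edge_ex HC0.
have [g gG [gx gy]] := arc_regular_ex (ucycle_edge esym HC0 xy) euw.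
by exists (act_cyc g C0); [rewrite act_cycE cyc_orbitE mem_orbit | rewrite -gx -gy act_edge].
Qed.

Lemma cc_orbit_face_at O v x : cc_orbit e G O -> e v x ->
  exists f y, [/\ f \in O, y != x, [set v; x] \in f, [set v; y] \in f & e v y].
Proof.
move=> HO evx; have [f fO xf] := cc_orbit_edge HO evx.
have Cf := uconsistent_ucycle (cc_orbit_consistent HO fO).
have [y yx yf] := ucycle_other_edge Cf xf.
by exists f, y; split; rewrite // (ucycle_edge esym Cf yf).
Qed.

Section SymmetricFromMap.
Hypotheses (eirr : irreflexive e) (tetra : tetravalent e).
Variable F : {set {set {set V}}}.
Hypotheses (HF : is_map e F) (HC : class2_01 e F) (HA : map_aut e F = G).

Definition swaps v a b := exists2 r, r \in G & [/\ r v = v, r a = b & r b = a].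

Lemma face_swap f v a b : f \in F -> [set v; a] \in f -> [set v; b] \in f -> a != b ->
  swaps v a b.
Proof.
move=> fF va vb ab; have [face_cycle _ _] := HF; have Cf := face_cycle f fF.
have evb := ucycle_edge esym Cf vb.
have flag_a : is_flag e F (v, [set v; a], f).
  by split; rewrite ?set21 //; exists v, a; rewrite (ucycle_edge esym Cf va).
have adj_b : flag_adj e F 1 (v, [set v; a], f) (v, [set v; b], f).
  split; first by split; rewrite ?set21 //; exists v, b.
  split => //; apply/eqP => /eq_set2 [[_ ba] | [_ bv]]; first by rewrite ba eqxx in ab.
  by rewrite bv eirr in evb.
have [_ adj1 _] := HC.2 _ flag_a; have [g] := adj1 _ adj_b.
rewrite HA => gG [gv gE gf].
have ga : g a = b.
  move: gE; rewrite imset_set2 gv => /eq_set2 [[_ ->] | [vb' _]] //.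
  by rewrite vb' eirr in evb.
have gbf : [set v; g b] \in f by rewrite -{1}gv -gf act_edge.
have gbb : g b != b by rewrite -{2}ga (inj_eq perm_inj) eq_sym.
by exists g => //; split => //; rewrite (ucycle_edges_at Cf vb va gbf).
Qed.

Lemma swaps_trans v x z z' : e v x -> e v z -> e v z' -> x != z -> z != z' -> x != z' ->
  swaps v x z -> swaps v z z' -> swaps v x z'.
Proof.
move=> ex ez ez' xz zz' xz' [s sG [sv sx sz]] [t tG [tv tz tz']].
exists (s * t); first by rewrite groupM.
set w := s z'.
have ew : e v w by rewrite /w -{1}sv group_autE.
have xw : x != w by rewrite /w -sz (inj_eq perm_inj).
have zw : z != w by rewrite /w -sx (inj_eq perm_inj).
have z'w : z' != w.
  by apply: contra xz => /eqP wz'; rewrite -sx (arc_regular_fix sG ez' sv) ?perm1.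
have etw : e v (t w) by rewrite -{1}tv group_autE.
have := tetravalent_neighbours tetra (l := [:: x; z; z'; w]) _ _ _ etw.
rewrite /= ex ez ez' ew !inE !negb_or xz xz' xw zz' zw z'w => /(_ isT erefl isT).
rewrite -{1}tz -{1}tz' !(inj_eq perm_inj) ![w == _]eq_sym (negbTE z'w) (negbTE zw).
have -> : (t w == w) = false.
  by apply/negbTE; apply: contra zz' => /eqP tw; rewrite -tz (arc_regular_fix tG ew tv tw) perm1.
by rewrite !orbF => /eqP twx; split; rewrite !permM ?sv ?tv ?sx ?tz // -/w twx.
Qed.

Lemma swap_neighbours v x y : e v x -> e v y -> x != y -> swaps v x y.
Proof.
move=> ex ey xy; have [_ _ /(_ v x y ex ey) cxy] := HF.
suff [yx | //] : y = x \/ swaps v x y by rewrite yx eqxx in xy.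
apply: (connect_ind (P := fun z => z = x \/ swaps v x z) _ _ cxy); first by left.
move=> a b /and3P [ea eb /existsP [f /and3P [fF fa fb]]] Pa.
have [-> | bx] := eqVneq b x; first by left.
have [<- // | ab] := eqVneq a b.
right; case: Pa => [ax | sxa]; first by rewrite -ax; apply: (face_swap fF).
have [xa | xa] := eqVneq x a; first by rewrite xa; apply: (face_swap fF).
by apply: (swaps_trans ex ea eb xa ab _ sxa (face_swap fF fa fb ab)); rewrite eq_sym.
Qed.

Lemma uconsistent_symmetric C : uconsistent e G C -> usymmetric e G C.
Proof.
move=> HCs; split => //; have [s [Ds Es /dconsistentE [g gG gs] _]] := HCs.
exists s; split => //; have [Us Ss Cs] := Ds.
case: s Us Ss Cs gs {Ds Es} => [|v0 [|v1 [|v2 w]]] // Us _ Cs gs.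
have [g0 g1] : g v0 = v1 /\ g v1 = v2 by case/and3P: gs => /eqP -> /eqP ->.
have [e10 e12] : e v1 v0 /\ e v1 v2 by case/and3P: Cs; rewrite esym => -> ->.
have v02 : v0 != v2 by case/and3P: Us; rewrite !inE !negb_or => /and3P [].
have [r rG [rv1 rv0 rv2]] := swap_neighbours e10 e12 v02.
have rgr : g ^ r = g^-1.
  apply: (arc_regular_uniq (u := v2) (v := v1)); rewrite ?groupJ ?groupV //; first by rewrite esym.
  - by rewrite conjgE !permM -{1}rv0 permK g0 rv1 -{1}g1 permK.
  - by rewrite conjgE !permM -{1}rv1 permK g1 rv2 -{1}g0 permK.
exists r => //; exists (index v2 (rev [:: v0, v1, v2 & w])).
rewrite map_cons rv0; apply: (fcycle_eq_rot (f := g^-1)).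
- exact: fcycle_revV.
- by rewrite -rgr -{1}rv0 -map_cons; apply: fcycle_mapJ.
- by rewrite mem_rev !inE eqxx !orbT.
- by rewrite size_rev size_map.
Qed.

Lemma map_orbits_symmetric O : cc_orbit e G O -> orbit_symmetric e G O.
Proof. by move=> HO C /(cc_orbit_consistent HO); apply: uconsistent_symmetric. Qed.

End SymmetricFromMap.

Lemma stab_map_rot C m t j t' : m \in G -> uniq t ->
  cycle_edges t = C -> cycle_edges t' = C -> map m t = rot j t' -> m \in 'C_G[C | cyc_act].
Proof.
move=> mG Ut Et Et' mt; rewrite inE mG; apply/astab1P.
by rewrite -act_cycE -Et (act_cycle_edges Ut mt) Et'.
Qed.

Section SymmetricCycle.
Variables (C : {set {set V}}) (s : seq V) (h h' r : {perm V}) (k : nat).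
Hypotheses (Us : uniq s) (Es : cycle_edges s = C).
Hypotheses (hG : h \in G) (hs : fcycle h s) (h'G : h' \in G) (h's : fcycle h' (rev s)).
Hypotheses (rG : r \in G) (rs : map r s = rot k (rev s)).

Lemma arc_from_base a x y : a \in s -> [set x; y] \in C ->
  exists2 m, m \in 'C_G[C | cyc_act] & m a = x /\ m (h a) = y.
Proof.
have Urs : uniq (rev s) by rewrite rev_uniq.
have Ers : cycle_edges (rev s) = C by rewrite cycle_edges_rev.
have hS : h \in 'C_G[C | cyc_act].
  by apply: (stab_map_rot (j := 1%N) hG Us Es Es); apply/eqP; rewrite -fcycle_rot1.
have h'S : h' \in 'C_G[C | cyc_act].
  by apply: (stab_map_rot (j := 1%N) h'G Urs Ers Ers); apply/eqP; rewrite -fcycle_rot1.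
have rS : r \in 'C_G[C | cyc_act] := stab_map_rot rG Us Es Ers rs.
move=> a_s; rewrite -{1}Es => /(cycle_edgesP _ _ Us) [xs [->|->]].
  have [j [ja jh]] := fcycle_expg_arc hs a_s xs.
  exists (h ^+ j); first by rewrite groupX.
  by rewrite ja jh (nextE hs).
have ras : r a \in rev s by rewrite -(mem_rot k) -rs map_f.
have xrs : x \in rev s by rewrite mem_rev.
have [j [ja jh]] := fcycle_expg_arc h's ras xrs.
exists (r * h' ^+ j); first by rewrite groupM ?groupX.
have rh : r (h a) = h' (r a).
  by rewrite -(nextE hs) // -(next_map (@perm_inj _ r) Us) rs (next_rot _ Urs) (nextE h's).
by rewrite !permM ja rh jh -(nextE h's) // next_rev.
Qed.

End SymmetricCycle.

Lemma symmetric_arc_transitive C a b c d : usymmetric e G C ->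
  [set a; b] \in C -> [set c; d] \in C ->
  exists2 m, m \in 'C_G[C | cyc_act] & m a = c /\ m b = d.
Proof.
case=> HC [s [Ds Es [r rG [k rs]]]] ab cd; have [Us _ _] := Ds.
have Ers : cycle_edges (rev s) = C by rewrite cycle_edges_rev.
have [h hG hs] := uconsistent_fcycle HC Ds Es.
have [h' h'G h's] := uconsistent_fcycle HC (dcycle_rev esym Ds) Ers.
have a_s : a \in s by rewrite -Es in ab; apply: cycle_edges_mem ab.
have base := arc_from_base Us Es hG hs h'G h's rG rs a_s.
have [m1 m1S [m1a m1b]] := base a b ab; have [m2 m2S [m2c m2d]] := base c d cd.
exists (m1^-1 * m2); first by rewrite groupM ?groupV.
by rewrite !permM -{1}m1a -m1b !permK.
Qed.

Section MapFromOrbits.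
Hypothesis tetra : tetravalent e.
Hypothesis Hsym : forall O, cc_orbit e G O -> orbit_symmetric e G O.

Lemma orbit_edge_uniq O C C' u w : cc_orbit e G O -> C \in O -> C' \in O ->
  [set u; w] \in C -> [set u; w] \in C' -> C = C'.
Proof.
move=> HO CO C'O uC uC'.
have /orbitP [k kG kC] : C' \in orbit cyc_act G C by rewrite -cyc_orbitE -(cc_orbit_mem HO CO).
have kuw : [set k^-1 u; k^-1 w] \in C.
  by have := act_edge k^-1 uC'; rewrite -kC act_cycE actK.
have [m /setIP [mG /astab1P mC] [mu mw]] := symmetric_arc_transitive (Hsym HO CO) kuw uC.
have ek := ucycle_edge esym (uconsistent_ucycle (cc_orbit_consistent HO CO)) kuw.
have km : k = m by apply: (arc_regular_uniq kG mG ek); rewrite ?permKV.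
by rewrite -kC km.
Qed.

Section TwoOrbits.
Hypothesis HG : G = graph_aut e :> {set {perm V}}.
Variables O1 O2 : {set {set {set V}}}.
Hypotheses (H1 : cc_orbit e G O1) (H2 : cc_orbit e G O2) (H12 : O1 != O2).
Local Notation F := (O1 :|: O2).

Lemma two_orbits_disjoint f : f \in O1 -> f \in O2 -> False.
Proof. by move=> f1 f2; case/eqP: H12; rewrite (cc_orbit_mem H1 f1) (cc_orbit_mem H2 f2). Qed.

Lemma face_cc_orbit f : f \in F -> cc_orbit e G (cyc_orbit G f).
Proof. by case/setUP => fO; [rewrite -(cc_orbit_mem H1 fO) | rewrite -(cc_orbit_mem H2 fO)]. Qed.

Lemma face_ucycle f : f \in F -> Defs.ucycle e f.
Proof.
move/face_cc_orbit/cc_orbit_consistent => Hf; apply/uconsistent_ucycle/Hf.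
by rewrite cyc_orbitE orbit_refl.
Qed.

Lemma map_aut_two_orbits : map_aut e F = G.
Proof.
apply/setP => g; rewrite inE -HG andb_idr // => gG.
have gN O : cc_orbit e G O -> g \in 'N(O | cyc_act).
  case=> C _ ->; rewrite cyc_orbitE; apply: (subsetP _ _ gG).
  exact: acts_orbit (subsetT _).
have /astabs_setact gF : g \in 'N(F | cyc_act).
  by apply: (subsetP (astabsU _ _ _)); rewrite inE !gN.
by apply/eqP; exact: gF.
Qed.

Lemma two_orbits_edge_faces u w : e u w -> #|[set f in F | [set u; w] \in f]| = 2.
Proof.
move=> euw; have [f1 f1O uf1] := cc_orbit_edge H1 euw.
have [f2 f2O uf2] := cc_orbit_edge H2 euw.
have -> : [set f in F | [set u; w] \in f] = [set f1; f2].
  apply/setP => f; rewrite !inE; apply/andP/orP => [[/orP [fO | fO] uf] | [/eqP -> | /eqP ->]].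
  - by left; apply/eqP; apply: (orbit_edge_uniq H1 fO f1O uf uf1).
  - by right; apply/eqP; apply: (orbit_edge_uniq H2 fO f2O uf uf2).
  - by rewrite f1O.
  - by rewrite f2O orbT.
rewrite cards2; case: eqP => // f12.
by case: (two_orbits_disjoint f1O); rewrite f12.
Qed.

Lemma two_orbits_rotation v x y : e v x -> e v y ->
  connect (fun a b => [&& e v a, e v b &
    [exists f in F, ([set v; a] \in f) && ([set v; b] \in f)]]) x y.
Proof.
move=> ex ey; set R := (fun a b => _).
have face_R f a b : f \in F -> [set v; a] \in f -> [set v; b] \in f -> R a b.
  move=> fF fa fb; have Cf := face_ucycle fF.
  by rewrite /R !(ucycle_edge esym Cf) //=; apply/existsP; exists f; rewrite fF fa fb.
(* Around v the faces alternate between O1 and O2: x -O1- p -O2- q -O1- r. *)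
have [f1 [p [f1O px xf1 pf1 evp]]] := cc_orbit_face_at H1 ex.
have [f2 [q [f2O qp pf2 qf2 evq]]] := cc_orbit_face_at H2 evp.
have [f3 [r [f3O rq qf3 rf3 evr]]] := cc_orbit_face_at H1 evq.
have C1 : Defs.ucycle e f1 by apply: face_ucycle; rewrite inE f1O.
have xp : x != p by rewrite eq_sym.
have qx : q != x.
  apply/eqP => qx; rewrite qx in qf2; apply: (two_orbits_disjoint f1O).
  have [f1cons f2cons] := (cc_orbit_consistent H1 f1O, cc_orbit_consistent H2 f2O).
  by rewrite (two_arc_uniq f1cons f2cons xf1 pf1 qf2 pf2 xp).
have xr : x != r.
  apply/eqP => xr; rewrite -xr in rf3; rewrite (orbit_edge_uniq H1 f3O f1O rf3 xf1) in qf3.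
  by rewrite (ucycle_edges_at C1 xf1 pf1 qf3 px qx) eqxx in qp.
have pr : p != r.
  apply/eqP => pr; rewrite -pr in rf3; rewrite (orbit_edge_uniq H1 f3O f1O rf3 pf1) in qf3.
  by rewrite (ucycle_edges_at C1 pf1 xf1 qf3 xp qp) eqxx in qx.
have Rxpqr : path R x [:: p; q; r].
  rewrite /= andbT; apply/and3P; split.
  - by apply: (face_R f1); rewrite // inE f1O.
  - by apply: (face_R f2); rewrite // inE f2O orbT.
  - by apply: (face_R f3); rewrite // inE f3O.
apply: (path_connect Rxpqr); apply: (tetravalent_neighbours tetra (v := v)) => //=.
- by rewrite !inE !negb_or xp eq_sym qx xr eq_sym qp pr eq_sym rq.
- by rewrite ex evp evq evr.
Qed.

Lemma is_map_two_orbits : is_map e F.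
Proof.
by split; [exact: face_ucycle | exact: two_orbits_edge_faces | exact: two_orbits_rotation].
Qed.

Lemma same_orbit_two_orbits v E f v' E' f' :
  is_flag e F (v, E, f) -> is_flag e F (v', E', f') ->
  same_orbit e F (v, E, f) (v', E', f') <-> f' \in cyc_orbit G f.
Proof.
move=> [vE EE Ef fF] [v'E' EE' E'f' f'F]; split.
  by case=> g; rewrite map_aut_two_orbits => gG [_ _ <-]; rewrite act_cycE cyc_orbitE mem_orbit.
move=> f'f; have [w Ew evw] := flag_edge esym vE EE; have [w' Ew' ev'w'] := flag_edge esym v'E' EE'.
subst E E'; have [g gG [gv gw]] := arc_regular_ex evw ev'w'.
exists g; first by rewrite map_aut_two_orbits.
rewrite /= imset_set2 gv gw (orbit_edge_uniq (C := act_cyc g f) (face_cc_orbit fF) _ f'f _ E'f') //.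
- by rewrite act_cycE cyc_orbitE mem_orbit.
- by rewrite -gv -gw act_edge.
Qed.

Lemma two_orbits_flag_classes : exists P1 P2, [/\ is_flag e F P1, is_flag e F P2,
  ~ same_orbit e F P1 P2 & forall Q, is_flag e F Q -> same_orbit e F P1 Q \/ same_orbit e F P2 Q].
Proof.
have [C0 /uconsistent_ucycle C0cyc _] := H1.
have [u [w uw]] := ucycle_edge_ex C0cyc; have euw := ucycle_edge esym C0cyc uw.
have [f1 f1O uf1] := cc_orbit_edge H1 euw; have [f2 f2O uf2] := cc_orbit_edge H2 euw.
have P1 : is_flag e F (u, [set u; w], f1) by split; rewrite ?set21 ?inE ?f1O //; exists u, w.
have P2 : is_flag e F (u, [set u; w], f2).
  by split; rewrite ?set21 ?inE ?f2O ?orbT //; exists u, w.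
exists (u, [set u; w], f1), (u, [set u; w], f2); split => //.
  move/(same_orbit_two_orbits P1 P2); rewrite -(cc_orbit_mem H1 f1O).
  by move/two_orbits_disjoint; apply.
case=> [[v E] f] Hf; have [_ _ _ /setUP [fO | fO]] := Hf; [left | right].
- by apply/(same_orbit_two_orbits P1 Hf); rewrite -(cc_orbit_mem H1 f1O).
- by apply/(same_orbit_two_orbits P2 Hf); rewrite -(cc_orbit_mem H2 f2O).
Qed.

Lemma two_orbits_flag_adj P : is_flag e F P ->
  [/\ forall Q, flag_adj e F 0 P Q -> same_orbit e F P Q,
      forall Q, flag_adj e F 1 P Q -> same_orbit e F P Q &
      forall Q, flag_adj e F 2 P Q -> ~ same_orbit e F P Q].
Proof.
have orbit_self f : f \in cyc_orbit G f by rewrite cyc_orbitE orbit_refl.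
case: P => [[v E] f] Hf; split.
- case=> [[v' E'] f'] [Hf' [_ E'E f'f]]; subst E' f'.
  by apply/(same_orbit_two_orbits Hf Hf'); apply: orbit_self.
- case=> [[v' E'] f'] [Hf' [v'v _ f'f]]; subst v' f'.
  by apply/(same_orbit_two_orbits Hf Hf'); apply: orbit_self.
- case=> [[v' E'] f'] [Hf' [v'v E'E ff']] /(same_orbit_two_orbits Hf Hf') f'f.
  subst v' E'; have [vE EE Ef fF] := Hf; have [_ _ Ef' _] := Hf'.
  have [w Ew _] := flag_edge esym vE EE; subst E.
  by case/eqP: ff'; apply: (orbit_edge_uniq (face_cc_orbit fF) f'f (orbit_self f) Ef' Ef).
Qed.

Lemma class2_01_two_orbits : class2_01 e F.
Proof. by split; [exact: two_orbits_flag_classes | exact: two_orbits_flag_adj]. Qed.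

End TwoOrbits.

End MapFromOrbits.

End ArcRegular.

Theorem theorem2p7 (V : finType) (e : rel V) (G : {group {perm V}}) :
  simple_graph e -> graph_connected e -> tetravalent e ->
  G \subset graph_aut e -> arc_regular e G ->
  (forall F : {set {set {set V}}},
     is_map e F -> class2_01 e F -> map_aut e F = G ->
     forall O, cc_orbit e G O -> orbit_symmetric e G O) /\
  (G = graph_aut e :> {set {perm V}} ->
   (forall O, cc_orbit e G O -> orbit_symmetric e G O) ->
   forall O1 O2, cc_orbit e G O1 -> cc_orbit e G O2 -> O1 != O2 ->
   exists F : {set {set {set V}}},
     [/\ is_map e F, class2_01 e F, map_aut e F = G & F = O1 :|: O2]).
Proof.
move=> [esym eirr] _ tetra GA AR; split.
  by move=> F HF HC HA; apply: (map_orbits_symmetric esym GA AR eirr tetra HF HC HA).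
move=> HG Hsym O1 O2 H1 H2 H12; exists (O1 :|: O2); split => //.
- exact: (is_map_two_orbits esym GA AR tetra Hsym H1 H2 H12).
- exact: (class2_01_two_orbits esym GA AR Hsym HG H1 H2 H12).
- exact: (map_aut_two_orbits HG H1 H2).
Qed.
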